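(* Let $X$ be a uniformly locally finite metric space and $h\colon X\to\mathbb{R}$ a map, regarded also as the multiplication operator on $\ell_2(X)$. The following are equivalent: (1) the map $h$ is coarse; (2) $\mathrm{dom}(h)$ is invariant under partial translations and, for every $r>0$, $\sup_f\|[h,v_f]\|<\infty$, the supremum over all partial $r$-translations $f$ of $X$; (3) $\mathrm{dom}(h)$ is invariant under partial translations and $\|[h,v_f]\|<\infty$ for every partial translation $f$ of $X$.
   Context: Uniformly locally finite: $\sup_x|B_r(x)|<\infty$ for all $r>0$. The multiplication operator of $h$ has domain $\{\xi\in\ell_2(X):\sum_x|h_x\xi_x|^2<\infty\}$ and $(h\xi)_x=h_x\xi_x$. A map $h\colon X\to\mathbb{R}$ is coarse if for every $r>0$ there is $s>0$ with $|h_x-h_z|\le s$ whenever $d(x,z)\le r$. A partial translation is a bijection $f\colon\mathrm{dom}(f)\subseteq X\to\mathrm{ran}(f)\subseteq X$ with $\sup_{x\in\mathrm{dom}(f)}d(x,f(x))<\infty$; it is a partial $r$-translation if this supremum is at most $r$. $v_f\delta_x=\delta_{f(x)}$ for $x\in\mathrm{dom}(f)$ and $0$ otherwise. A subspace $E$ is invariant under partial translations if $v_f(E)\subseteq E$ for all partial translations $f$. $[h,v_f]=hv_f-v_fh$ on $\mathrm{dom}(h)$, and $\|\cdot\|$ denotes the possibly infinite operator norm on the domain. *)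

From HB Require Import structures.
From mathcomp Require Import all_boot all_order all_algebra.
From mathcomp Require Import all_classical all_reals.
From mathcomp Require Import ereal esum.
From mathcomp Require Import complex.
From Stdlib Require Import List.
Set Implicit Arguments. Unset Strict Implicit. Unset Printing Implicit Defensive.
Import Order.TTheory GRing.Theory Num.Theory.
Local Open Scope ring_scope.
Local Open Scope classical_set_scope.

Section Defs.
Variables (R : realType) (X : choiceType).

Definition is_metric (d : X -> X -> R) : Prop :=
  [/\ forall x y, 0 <= d x y,
      forall x y, d x y = 0 <-> x = y,
      forall x y, d x y = d y x &
      forall x y z, d x z <= d x y + d y z].

Definition ball_set (d : X -> X -> R) (r : R) (x : X) : set X :=
  [set z | d x z <= r].

Definition unif_loc_finite (d : X -> X -> R) : Prop :=
  forall r : R, 0 < r -> exists N : nat, forall x : X,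
    exists l : list X, (length l <= N)%N /\
      forall z, ball_set d r x z -> List.In z l.

Definition coarse (d : X -> X -> R) (h : X -> R) : Prop :=
  forall r : R, 0 < r -> exists s : R, 0 < s /\
    forall x z, d x z <= r -> `|h x - h z| <= s.

Definition sqmod (z : R[i]) : R := (@complex.Re R z) ^+ 2 + (@complex.Im R z) ^+ 2.

Definition l2sq (xi : X -> R[i]) : \bar R :=
  \esum_(x in [set: X]) (sqmod (xi x))%:E.

Definition in_l2 (xi : X -> R[i]) : Prop := (l2sq xi < +oo)%E.

Definition mulop (h : X -> R) (xi : X -> R[i]) : X -> R[i] :=
  fun x => (h x)%:C%C * xi x.

Definition dom_mul (h : X -> R) : set (X -> R[i]) :=
  [set xi | in_l2 xi /\ (l2sq (mulop h xi) < +oo)%E].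

(* A partial translation f : dom(f) -> ran(f), represented by the partial
   map fwd together with its inverse bwd (fwd x = Some y iff x in dom(f)
   and f x = y; bwd is the inverse bijection ran(f) -> dom(f)). *)
Record ptrans (d : X -> X -> R) := PTrans {
  pt_fwd : X -> option X;
  pt_bwd : X -> option X;
  pt_inv : forall x y, pt_fwd x = Some y <-> pt_bwd y = Some x;
  pt_bdd : exists r : R, forall x y, pt_fwd x = Some y -> d x y <= r
}.

Definition is_rtrans (d : X -> X -> R) (r : R) (f : ptrans d) : Prop :=
  forall x y, pt_fwd f x = Some y -> d x y <= r.

(* v_f delta_x = delta_{f x} for x in dom f, 0 otherwise;
   hence (v_f xi)_y = xi_{f^-1 y} if y in ran f, 0 otherwise. *)
Definition vop (d : X -> X -> R) (f : ptrans d) (xi : X -> R[i]) : X -> R[i] :=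
  fun y => match pt_bwd f y with Some x => xi x | None => 0 end.

Definition comm (d : X -> X -> R) (h : X -> R) (f : ptrans d)
    (xi : X -> R[i]) : X -> R[i] :=
  fun y => mulop h (vop f xi) y - vop f (mulop h xi) y.

Definition opnorm_le (D : set (X -> R[i])) (T : (X -> R[i]) -> X -> R[i])
    (C : R) : Prop :=
  forall xi, D xi -> (l2sq (T xi) <= (C ^+ 2)%:E * l2sq xi)%E.

Definition dom_invariant (d : X -> X -> R) (h : X -> R) : Prop :=
  forall (f : ptrans d) xi, dom_mul h xi -> dom_mul h (vop f xi).

End Defs.

(* If |h x - h z| <= s whenever d x z <= r, then [h, v_f] multiplies the
   coordinate at f x by h (f x) - h x, so its norm is at most s for every
   partial r-translation f; writing h (f x) = h x + (h (f x) - h x) likewise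
   shows that v_f preserves dom(h).
   Conversely, if h is not coarse at scale r, choose pairs (x_n, z_n) with
   d x_n z_n <= r and |h x_n - h z_n| growing so fast that, the r-balls being
   finite, the x_n are pairwise distinct and so are the z_n.  Then x_n |-> z_n
   is a partial translation, and [h, v_f] delta_(x_n) has norm
   |h x_n - h z_n|, which is unbounded. *)

From HB Require Import structures.
From mathcomp Require Import all_boot all_order all_algebra.
From mathcomp Require Import all_classical all_reals.
From mathcomp Require Import ereal esum.
From mathcomp Require Import complex.
From mathcomp Require Import ring lra.

Set Implicit Arguments.
Unset Strict Implicit.
Unset Printing Implicit Defensive.

Import Order.TTheory GRing.Theory Num.Theory.
Local Open Scope ring_scope.
Local Open Scope classical_set_scope.

Section Sqmod.
Variable R : realType.
Implicit Types (p q : R) (z : R[i]).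

Lemma sqmod_ge0 z : 0 <= sqmod z.
Proof. by rewrite /sqmod addr_ge0 // sqr_ge0. Qed.

Lemma sqmod0 : sqmod (0 : R[i]) = 0.
Proof. by rewrite /sqmod /= expr0n /= addr0. Qed.

Lemma sqmod1 : sqmod (1 : R[i]) = 1.
Proof. by rewrite /sqmod /= expr1n expr0n /= addr0. Qed.

Lemma sqmodM p z : sqmod (p%:C%C * z) = p ^+ 2 * sqmod z.
Proof. by case: z => a b; rewrite /sqmod /=; ring. Qed.

Lemma sqmodMB p q z : sqmod (p%:C%C * z - q%:C%C * z) = (p - q) ^+ 2 * sqmod z.
Proof. by case: z => a b; rewrite /sqmod /=; ring. Qed.

End Sqmod.

Lemma esumZl_le (R : realType) (T : choiceType) (S : set T) (a : T -> \bar R) (c : R) :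
  0 <= c -> (forall i, (0 <= a i)%E) ->
  (\esum_(i in S) (c%:E * a i) <= c%:E * \esum_(i in S) a i)%E.
Proof.
move=> c0 a0; apply: ge_ereal_sup => _ [F [finF FS] <-].
rewrite fsbig_finite //= -ge0_sume_distrr; last by move=> i _; exact: a0.
rewrite -fsbig_finite //; apply: lee_wpmul2l; first by rewrite lee_fin.
by apply: ereal_sup_ubound; exists F.
Qed.

Lemma esum_sqmodZ_le (R : realType) (X : choiceType) (c : R) (xi : X -> R[i]) :
  0 <= c -> (\esum_(x in [set: X]) (c * sqmod (xi x))%:E <= c%:E * l2sq xi)%E.
Proof.
move=> c0; under eq_esum do rewrite EFinM.
by apply: esumZl_le => // x; rewrite lee_fin sqmod_ge0.
Qed.

Section PartialTranslation.
Variables (R : realType) (X : choiceType) (d : X -> X -> R) (f : ptrans d).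
Implicit Types (xi : X -> R[i]) (x y : X).

Lemma vop_Some xi x y : pt_bwd f y = Some x -> vop f xi y = xi x.
Proof. by rewrite /vop => ->. Qed.

Lemma vop_None xi y : pt_bwd f y = None -> vop f xi y = 0.
Proof. by rewrite /vop => ->. Qed.

Lemma ptrans_rtrans : exists r, 0 < r /\ is_rtrans r f.
Proof.
have [r fr] := pt_bdd f; exists (Num.max r 1); split; first by rewrite lt_max ltr01 orbT.
by move=> x y /fr dxy; rewrite le_max dxy.
Qed.

(* Reindex the sum over ran f as a sum over dom f along f. *)
Lemma l2sq_le_ptrans (a : X -> R[i]) (g : X -> R) :
  (forall x, 0 <= g x) ->
  (forall y, pt_bwd f y = None -> a y = 0) ->
  (forall x y, pt_bwd f y = Some x -> sqmod (a y) <= g x) ->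
  (l2sq a <= \esum_(x in [set: X]) (g x)%:E)%E.
Proof.
move=> g0 a0 ag.
pose dom := [set x | pt_fwd f x <> None].
pose ran := [set y | pt_bwd f y <> None].
pose e x := odflt x (pt_fwd f x).
pose G y := if pt_bwd f y is Some x then g x else 0.
have e_bij : set_bij dom ran e.
  split.
  - move=> x; rewrite /dom /ran /e /=.
    by case E: (pt_fwd f x) => [y|] // _; rewrite (pt_inv f x y).1.
  - move=> x1 x2; rewrite !in_setE /dom /e /=.
    case E1: (pt_fwd f x1) => [y1|] // _; case E2: (pt_fwd f x2) => [y2|] // _ /= y12.
    by move: E1 E2; rewrite y12 => /(pt_inv f) b1 /(pt_inv f); rewrite b1 => -[].
  - move=> y; rewrite /ran /dom /e /=; case E: (pt_bwd f y) => [x|] // _.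
    by exists x; rewrite /= (pt_inv f x y).2.
apply: (@le_trans _ _ (\esum_(y in ran) (G y)%:E)%E).
  rewrite /l2sq [X in (_ <= X)%E]esum_mkcond; apply: le_esum => y _.
  rewrite /ran /G; case E: (pt_bwd f y) => [x|].
    by rewrite mem_set /= ?lee_fin ?(ag x) ?E.
  by rewrite memNset ?E //= a0 // sqmod0.
rewrite (reindex_esum _ _ _ _ e_bij).
rewrite (@eq_esum _ _ _ _ (fun x => (g x)%:E)); last first.
  move=> x; rewrite /dom /G /e /=.
  by case E: (pt_fwd f x) => [y|] // _; rewrite (pt_inv f x y).1.
rewrite [X in (X <= _)%E]esum_mkcond; apply: le_esum => x _.
by case: ifP => // _; rewrite lee_fin.
Qed.

Lemma l2sq_vop_le xi : (l2sq (vop f xi) <= l2sq xi)%E.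
Proof.
apply: l2sq_le_ptrans => [x|y /vop_None ->|x y /vop_Some ->] //; exact: sqmod_ge0.
Qed.

End PartialTranslation.

Section Delta.
Variables (R : realType) (X : choiceType) (d : X -> X -> R) (h : X -> R).

Definition delta (x : X) : X -> R[i] := fun y => if y == x then 1 else 0.

Lemma l2sq_supp1 (a : X -> R[i]) (x : X) :
  (forall y, y != x -> a y = 0) -> l2sq a = (sqmod (a x))%:E.
Proof.
move=> a0; rewrite /l2sq (esumID [set x]); last by move=> y _; rewrite lee_fin sqmod_ge0.
rewrite setTI esum_set1; last by rewrite lee_fin sqmod_ge0.
rewrite esum1 ?adde0 // => y [_ /eqP yx].
by rewrite a0 ?sqmod0.
Qed.

Lemma l2sq_delta x : l2sq (delta x) = 1%:E.
Proof.
by rewrite (l2sq_supp1 (x := x)) /delta ?eqxx ?sqmod1 // => y /negbTE ->.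
Qed.

Lemma dom_mul_delta x : dom_mul h (delta x).
Proof.
split; first by rewrite /in_l2 l2sq_delta ltry.
by rewrite (l2sq_supp1 (x := x)) ?ltry // => y /negbTE; rewrite /mulop /delta => ->; rewrite mulr0.
Qed.

Lemma l2sq_comm_delta (f : ptrans d) x y : pt_fwd f x = Some y ->
  l2sq (comm h f (delta x)) = ((h y - h x) ^+ 2)%:E.
Proof.
move=> fxy; have bxy := (pt_inv f x y).1 fxy.
rewrite (l2sq_supp1 (x := y)); last first.
  move=> z zy; rewrite /comm /mulop.
  case E: (pt_bwd f z) => [x'|]; last by rewrite !vop_None // mulr0 subrr.
  rewrite !(vop_Some _ E) /delta; case: eqP => [x'x|]; last by rewrite !mulr0 subrr.
  move: E; rewrite x'x => /(pt_inv f); rewrite fxy => -[yz].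
  by move: zy; rewrite yz eqxx.
by rewrite /comm /mulop !(vop_Some _ bxy) sqmodMB /delta eqxx sqmod1 mulr1.
Qed.

Lemma comm_opnorm_jump (f : ptrans d) (C : R) x y :
  opnorm_le (dom_mul h) (comm h f) C -> pt_fwd f x = Some y -> `|h x - h y| <= `|C|.
Proof.
move=> fC fxy; have := fC _ (dom_mul_delta x).
rewrite (l2sq_comm_delta fxy) l2sq_delta mule1 lee_fin -sqrrN opprB.
by rewrite -real_normK ?num_real // -[C ^+ 2]real_normK ?num_real // ler_pXn2r ?nnegrE.
Qed.

End Delta.

Section CoarseImpliesBounded.
Variables (R : realType) (X : choiceType) (d : X -> X -> R) (h : X -> R).
Variables (f : ptrans d) (r s : R).
Hypotheses (fr : is_rtrans r f) (hs : forall x z, d x z <= r -> `|h x - h z| <= s).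

Let jump_sqr x y : pt_bwd f y = Some x -> (h y - h x) ^+ 2 <= s ^+ 2.
Proof.
move=> /(pt_inv f) /fr /hs; rewrite -normrN opprB => hxy.
rewrite -real_normK ?num_real // -[s ^+ 2]real_normK ?num_real //.
by rewrite lerXn2r ?nnegrE // (le_trans hxy) ?ler_norm.
Qed.

Lemma comm_opnorm_le : opnorm_le (dom_mul h) (comm h f) s.
Proof.
move=> xi _; apply: le_trans (esum_sqmodZ_le xi (sqr_ge0 s)).
apply: (l2sq_le_ptrans (f := f)) => [x|y E|x y E].
- by rewrite mulr_ge0 ?sqr_ge0 ?sqmod_ge0.
- by rewrite /comm /mulop !vop_None // mulr0 subrr.
- by rewrite /comm /mulop !(vop_Some _ E) sqmodMB ler_wpM2r ?sqmod_ge0 ?(jump_sqr E).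
Qed.

Lemma l2sq_mul_vop_le xi :
  (l2sq (mulop h (vop f xi)) <= 2%:E * l2sq (mulop h xi) + (2 * s ^+ 2)%:E * l2sq xi)%E.
Proof.
apply: le_trans (leeD (esum_sqmodZ_le _ (ler0n R 2))
                      (esum_sqmodZ_le _ (mulr_ge0 (ler0n R 2) (sqr_ge0 s)))).
rewrite -esumD => [|x _|x _]; last 2 first.
- by rewrite -[0%R]/(0%:E) lee_fin mulr_ge0 ?sqmod_ge0.
- by rewrite -[0%R]/(0%:E) lee_fin mulr_ge0 ?sqmod_ge0 // mulr_ge0 ?sqr_ge0.
under [X in (_ <= X)%E]eq_esum do rewrite -EFinD.
apply: (l2sq_le_ptrans (f := f)) => [x|y E|x y E].
- by rewrite addr_ge0 // mulr_ge0 ?sqmod_ge0 // mulr_ge0 ?sqr_ge0.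
- by rewrite /mulop vop_None // mulr0.
rewrite /mulop (vop_Some _ E) !sqmodM mulrA -mulrDl ler_wpM2r ?sqmod_ge0 //.
have := jump_sqr E; have := sqr_ge0 (h x + (h x - h y)); nra.
Qed.

End CoarseImpliesBounded.

Lemma coarse_dom_invariant (R : realType) (X : choiceType) (d : X -> X -> R) (h : X -> R) :
  coarse d h -> dom_invariant d h.
Proof.
move=> hc f xi [xi_l2 hxi_l2].
have [r [r0 fr]] := ptrans_rtrans f; have [s [_ hs]] := hc r r0.
split; first exact: le_lt_trans (l2sq_vop_le f xi) xi_l2.
apply: le_lt_trans (l2sq_mul_vop_le fr hs xi) _.
by rewrite lte_add_pinfty // lte_mul_pinfty // -[0%R]/(0%:E) lee_fin mulr_ge0 ?sqr_ge0.
Qed.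

Section EscapingSequence.
Variables (R : realDomainType) (T : Type) (B : T -> R) (g : R -> T * T).
Hypotheses (gB1 : forall t, t < B (g t).1) (gB2 : forall t, t < B (g t).2).

(* Each threshold exceeds all values of B met so far, so B separates the new
   points from the old ones. *)
Fixpoint escape (n : nat) : R :=
  if n is m.+1 then Num.max (escape m + 1) (Num.max (B (g (escape m)).1) (B (g (escape m)).2))
  else 0.

Lemma escape_ge n : n%:R <= escape n.
Proof.
elim: n => [//|n IHn]; rewrite /= le_max -natr1 lerD2r IHn //.
Qed.

Lemma escape_nondecreasing : {homo escape : m n / (m <= n)%N >-> m <= n}.
Proof.
apply: homo_leq => [|y x z|n]; [exact: lexx|exact: le_trans|].
by rewrite /= le_max lerDl ler01.
Qed.

Lemma escape_B_lt k n : (k < n)%N ->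
  B (g (escape k)).1 < B (g (escape n)).1 /\ B (g (escape k)).2 < B (g (escape n)).2.
Proof.
move=> kn; have le_kn := escape_nondecreasing kn.
have [le1 le2] : B (g (escape k)).1 <= escape k.+1 /\ B (g (escape k)).2 <= escape k.+1.
  by rewrite /= !le_max !lexx !orbT.
split; first exact: le_lt_trans (le_trans le1 le_kn) (gB1 _).
exact: le_lt_trans (le_trans le2 le_kn) (gB2 _).
Qed.

Lemma escape_inj1 : injective (fun n => (g (escape n)).1).
Proof.
move=> m n /= e; case: (ltngtP m n) => // lt_mn; have [] := escape_B_lt lt_mn;
  by rewrite e ltxx.
Qed.

Lemma escape_inj2 : injective (fun n => (g (escape n)).2).
Proof.
move=> m n /= e; case: (ltngtP m n) => // lt_mn; have [] := escape_B_lt lt_mn;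
  by rewrite e ltxx.
Qed.

End EscapingSequence.

Lemma ptrans_of_seq (R : realType) (X : choiceType) (d : X -> X -> R) (r : R)
    (a b : nat -> X) :
  injective a -> injective b -> (forall n, d (a n) (b n) <= r) ->
  exists f : ptrans d, forall n, pt_fwd f (a n) = Some (b n).
Proof.
move=> a_inj b_inj dab.
pose fwd x := if pselect (exists n, a n = x) is left e then Some (b (projT1 (cid e))) else None.
pose bwd y := if pselect (exists n, b n = y) is left e then Some (a (projT1 (cid e))) else None.
have fwdP x y : fwd x = Some y <-> exists n, a n = x /\ b n = y.
  rewrite /fwd; case: pselect => [e|ne]; last by split=> // -[n [an _]]; case: ne; exists n.
  case: (cid e) => m /= am; split=> [[<-]|[n [an <-]]]; first by exists m.
  by rewrite (a_inj m n) // am an.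
have bwdP x y : bwd y = Some x <-> exists n, a n = x /\ b n = y.
  rewrite /bwd; case: pselect => [e|ne]; last by split=> // -[n [_ bn]]; case: ne; exists n.
  case: (cid e) => m /= bm; split=> [[<-]|[n [<- bn]]]; first by exists m.
  by rewrite (b_inj m n) // bm bn.
have inv x y : fwd x = Some y <-> bwd y = Some x by rewrite fwdP bwdP.
have bdd : exists r, forall x y, fwd x = Some y -> d x y <= r.
  by exists r => x y /fwdP [n [<- <-]].
by exists (PTrans inv bdd) => n /=; apply/fwdP; exists n.
Qed.

Lemma ler_sum_In (R : numDomainType) (T : Type) (F : T -> R) (l : list T) (w : T) :
  (forall v, 0 <= F v) -> List.In w l -> F w <= \sum_(v <- l) F v.
Proof.
move=> F0; elim: l => [//|v l IHl] /= [->|wl]; rewrite big_cons.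
  by rewrite lerDl sumr_ge0.
by rewrite (le_trans (IHl wl)) // lerDr.
Qed.

Lemma unif_loc_finite_jump_bound (R : realType) (X : choiceType) (d : X -> X -> R) (h : X -> R)
    (r : R) :
  unif_loc_finite d -> 0 < r ->
  exists B : X -> R, forall x z, d x z <= r -> `|h x - h z| <= B x.
Proof.
move=> hulf r0; have [N ballN] := hulf r r0.
have /choice [L ballL] : forall x, exists l : list X, forall z, d x z <= r -> List.In z l.
  by move=> x; have [l [_ bl]] := ballN x; exists l.
exists (fun x => \sum_(w <- L x) `|h x - h w|) => x z /(ballL x z).
exact: ler_sum_In.
Qed.

Lemma comm_bounded_coarse (R : realType) (X : choiceType) (d : X -> X -> R) (h : X -> R) :
  (forall x y, d x y = d y x) -> unif_loc_finite d ->
  (forall f : ptrans d, exists C : R, opnorm_le (dom_mul h) (comm h f) C) ->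
  coarse d h.
Proof.
move=> dC hulf bounded r r0; apply: contrapT => not_coarse.
have big_jump t : exists p : X * X, d p.1 p.2 <= r /\ t < `|h p.1 - h p.2|.
  apply: contrapT => no_pair; apply: not_coarse; exists (`|t| + 1).
  split=> [|x z dxz]; first by rewrite ltr_wpDl.
  rewrite leNgt; apply/negP => jump; apply: no_pair; exists (x, z); split=> //=.
  by apply: le_lt_trans jump; rewrite (le_trans (ler_norm t)) ?lerDl.
have [g gP] := choice big_jump.
have [B hB] := unif_loc_finite_jump_bound h hulf r0.
have gB1 t : t < B (g t).1 by apply: lt_le_trans (gP t).2 (hB _ _ (gP t).1).
have gB2 t : t < B (g t).2.
  have [dg jump] := gP t; rewrite distrC in jump.
  by apply: lt_le_trans jump (hB _ _ _); rewrite dC.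
have [f fP] := ptrans_of_seq (escape_inj1 gB1 gB2) (escape_inj2 gB1 gB2) (fun n => (gP _).1).
have [C fC] := bounded f; have [n Cn] : exists n : nat, `|C| < n%:R.
  by exists (Num.bound `|C|); rewrite archi_boundP.
have := comm_opnorm_jump fC (fP n); apply/negP; rewrite -ltNge.
exact: lt_trans Cn (le_lt_trans (escape_ge B g n) (gP _).2).
Qed.

Theorem proposition3p1p5 (R : realType) (X : choiceType) (d : X -> X -> R)
  (hd : is_metric d) (hulf : unif_loc_finite d) (h : X -> R) :
  [<-> coarse d h;
       dom_invariant d h /\
         (forall r : R, 0 < r -> exists C : R, forall f : ptrans d,
            is_rtrans r f -> opnorm_le (dom_mul h) (comm h f) C);
       dom_invariant d h /\
         (forall f : ptrans d, exists C : R,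
            opnorm_le (dom_mul h) (comm h f) C)].
Proof.
tfae.
- move=> hc; split; first exact: coarse_dom_invariant.
  move=> r r0; have [s [_ hs]] := hc r r0.
  by exists s => f fr; exact: comm_opnorm_le fr hs.
- move=> [inv bounded]; split=> // f.
  have [r [r0 fr]] := ptrans_rtrans f; have [C fC] := bounded r r0.
  by exists C; exact: fC.
- have [_ _ dC _] := hd.
  by move=> [_ bounded]; exact: comm_bounded_coarse dC hulf bounded.
Qed.
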